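(* Let $\alpha\in(-1,1)$. For every integer $k\ge0$, $$\Phi_k=\alpha\,\tilde\Phi_{k+1}+\beta_k\,\tilde\Phi_k,\qquad \frac{\partial\Phi_k}{\partial\alpha}=-4\,\tilde\Phi_{k+1}+\gamma_k\,\tilde\Phi_k,$$ where $\beta_k=\dfrac{K_{k,k}}{\tilde K_{k,k}}$ and $\gamma_k=\dfrac{1}{\tilde K_{k,k}}\dfrac{\partial K_{k,k}}{\partial\alpha}$.
   Context: For a parameter $\alpha\in(-1,1)$ define on $[-1,1]$ the weights $\omega(\mu)=(1+\alpha\mu)^{-4}$ and $\tilde\omega(\mu)=(1+\alpha\mu)^{-5}$. Let $\{\phi_k\}_{k\ge0}$ (resp. $\{\tilde\phi_k\}_{k\ge0}$) be the monic orthogonal polynomials on $[-1,1]$ with respect to $\omega$ (resp. $\tilde\omega$): $\phi_k$ is monic of degree $k$ and $\int_{-1}^1\phi_j\phi_k\,\omega\,d\mu=0$ for $j\neq k$ (similarly for $\tilde\phi_k$ with $\tilde\omega$); their coefficients depend smoothly on $\alpha$. Set $\Phi_k=\omega\phi_k$, $\tilde\Phi_k=\tilde\omega\tilde\phi_k$, $K_{j,k}=\int_{-1}^1\mu^j\phi_k\,\omega\,d\mu$ and $\tilde K_{j,k}=\int_{-1}^1\mu^j\tilde\phi_k\,\tilde\omega\,d\mu$ (so $K_{k,k}=\int_{-1}^1\phi_k^2\omega\,d\mu>0$ and $\tilde K_{k,k}>0$). *)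

From Stdlib Require Import Reals ClassicalEpsilon.
Open Scope R_scope.

(* The Riemann integral of f over [a,b] as a real number: the value
   RiemannInt pr for some integrability proof pr (chosen by epsilon;
   all proofs give the same value). *)
Definition RInt (f : R -> R) (a b : R) : R :=
  epsilon (inhabits 0)
    (fun v => exists pr : Riemann_integrable f a b, RiemannInt pr = v).

Definition omega (alpha mu : R) : R := / (1 + alpha * mu) ^ 4.
Definition omegat (alpha mu : R) : R := / (1 + alpha * mu) ^ 5.

(* A family of polynomials given by coefficients:
   c k j alpha = coefficient of mu^j in the degree-k polynomial phi_k
   (depending on alpha); phi_k(mu) = sum_{j=0}^k c k j alpha mu^j. *)
Definition poly_of (c : nat -> nat -> R -> R) (k : nat) (alpha mu : R) : R :=
  sum_f_R0 (fun j => c k j alpha * mu ^ j) k.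

Definition monic_orthogonal (w : R -> R -> R) (c : nat -> nat -> R -> R)
    (alpha : R) : Prop :=
  (forall k, c k k alpha = 1) /\
  (forall j k, j <> k ->
     RInt (fun mu => poly_of c j alpha mu * poly_of c k alpha mu * w alpha mu)
       (-1) 1 = 0).

Definition Phi_of (w : R -> R -> R) (c : nat -> nat -> R -> R) (k : nat)
    (alpha mu : R) : R :=
  w alpha mu * poly_of c k alpha mu.

Definition K_of (w : R -> R -> R) (c : nat -> nat -> R -> R) (j k : nat)
    (alpha : R) : R :=
  RInt (fun mu => mu ^ j * poly_of c k alpha mu * w alpha mu) (-1) 1.

From Pilot Require Import Defs.
From Stdlib Require Import Reals Lra Lia Arith ClassicalEpsilon.
From Coquelicot Require Import Coquelicot.
Open Scope R_scope.

(* Since [omega = (1 + alpha mu) omegat], both [Phi_k] and [d Phi_k / d alpha] are of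
   the form [omegat F] with [F] a polynomial of degree [k + 1]: [F = (1 + alpha mu) phi_k]
   with leading coefficient [alpha], resp. [F = -4 mu phi_k + (1 + alpha mu) d phi_k / d alpha]
   with leading coefficient [-4] ([phi_k] stays monic).  Such an [F] is
   [omegat]-orthogonal to [mu^i] for [i < k]: [int mu^i F omegat] is [K_(i,k)], resp.
   its [alpha]-derivative, and [K_(i,k)] vanishes identically for [i < k].  Expanding
   [F] in the basis [phit_0, ..., phit_(k+1)] therefore leaves only [phit_(k+1)] and
   [phit_k], the latter with coefficient [int mu^k F omegat / Kt_(k,k)]; positivity of
   [omegat] makes [Kt_(k,k)] nonzero and the expansion exact. *)

Definition Icont (f : R -> R) : Prop := forall x, -1 <= x <= 1 -> continuous f x.
Definition Iint (f : R -> R) : R := RInt f (-1) 1.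

Lemma Icont_const c : Icont (fun _ => c).
Proof. intros x _; apply continuous_const. Qed.

Lemma Icont_id : Icont (fun x => x).
Proof. intros x _; apply continuous_id. Qed.

Lemma Icont_plus f g : Icont f -> Icont g -> Icont (fun x => f x + g x).
Proof. intros Hf Hg x Hx; apply (continuous_plus f g); auto. Qed.

Lemma Icont_mult f g : Icont f -> Icont g -> Icont (fun x => f x * g x).
Proof. intros Hf Hg x Hx; apply (continuous_mult f g); auto. Qed.

Lemma Icont_pow f n : Icont f -> Icont (fun x => f x ^ n).
Proof.
  intros Hf; induction n; simpl; [apply Icont_const | apply Icont_mult; auto].
Qed.

Lemma Icont_ext f g : (forall x, f x = g x) -> Icont f -> Icont g.
Proof. intros E Hf x Hx; apply (continuous_ext f); auto. Qed.

Lemma ex_RInt_Icont f a b : -1 <= a -> a <= b -> b <= 1 -> Icont f -> ex_RInt f a b.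
Proof.
  intros Ha Hab Hb Hf. apply (@ex_RInt_continuous R_CompleteNormedModule).
  intros z Hz. rewrite Rmin_left, Rmax_right in Hz by lra. apply Hf; lra.
Qed.

Lemma RInt_Defs_Iint f : Icont f -> Defs.RInt f (-1) 1 = Iint f.
Proof.
  intros Hf. unfold Defs.RInt.
  destruct (epsilon_spec (inhabits 0)
    (fun v => exists pr : Riemann_integrable f (-1) 1, RiemannInt pr = v)) as [pr <-].
  - assert (Hex : ex_RInt f (-1) 1) by (apply ex_RInt_Icont; lra || exact Hf).
    exists (RiemannInt (ex_RInt_Reals_0 _ _ _ Hex)); eauto.
  - symmetry; apply RInt_Reals.
Qed.

Lemma Iint_plus f g : Icont f -> Icont g -> Iint (fun x => f x + g x) = Iint f + Iint g.
Proof. intros; apply (RInt_plus f g); apply ex_RInt_Icont; lra || assumption. Qed.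

Lemma Iint_scal l f : Icont f -> Iint (fun x => l * f x) = l * Iint f.
Proof. intros; apply (RInt_scal f); apply ex_RInt_Icont; lra || assumption. Qed.

Lemma Iint_ext f g : (forall x, -1 <= x <= 1 -> f x = g x) -> Iint f = Iint g.
Proof.
  intros E. apply RInt_ext. intros x Hx.
  rewrite Rmin_left, Rmax_right in Hx by lra. apply E; lra.
Qed.

Lemma Iint_0 : Iint (fun _ => 0) = 0.
Proof. unfold Iint. rewrite RInt_const. unfold scal; simpl; unfold mult; simpl; ring. Qed.

Lemma continuous_eps_delta (f : R -> R) x e : continuous f x -> 0 < e ->
  exists d : posreal, forall y, Rabs (y - x) < d -> Rabs (f y - f x) < e.
Proof.
  intros Hf He. destruct (Hf _ (locally_ball (f x) (mkposreal e He))) as [d Hd].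
  exists d. intros y Hy. exact (Hd y Hy).
Qed.

Lemma Iint_ge0_eq0 f : Icont f -> (forall x, -1 <= x <= 1 -> 0 <= f x) -> Iint f = 0 ->
  forall x, -1 <= x <= 1 -> f x = 0.
Proof.
  intros Hf Hnn HI x0 Hx0.
  destruct (Rle_lt_or_eq_dec 0 (f x0) (Hnn x0 Hx0)) as [Hp|]; [exfalso|auto].
  destruct (continuous_eps_delta f x0 _ (Hf x0 Hx0) Hp) as [d Hd].
  assert (Hd0 := cond_pos d).
  set (a := Rmax (-1) (x0 - d / 2)); set (b := Rmin 1 (x0 + d / 2)).
  assert (Ha : -1 <= a /\ x0 - d / 2 <= a) by (split; [apply Rmax_l | apply Rmax_r]).
  assert (Hb : b <= 1 /\ b <= x0 + d / 2) by (split; [apply Rmin_l | apply Rmin_r]).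
  assert (Hab : a < b) by (unfold a, b; apply Rmax_case; apply Rmin_case; lra).
  assert (I1 : 0 <= RInt f (-1) a).
  { apply RInt_ge_0; [lra | apply ex_RInt_Icont; lra || auto | intros; apply Hnn; lra]. }
  assert (I2 : 0 < RInt f a b).
  { apply RInt_gt_0; [lra | | intros y Hy; apply Hf; lra].
    intros y Hy. assert (Hy' : Rabs (y - x0) < d) by (apply Rabs_def1; lra).
    specialize (Hd y Hy'). apply Rabs_def2 in Hd. lra. }
  assert (I3 : 0 <= RInt f b 1).
  { apply RInt_ge_0; [lra | apply ex_RInt_Icont; lra || auto | intros; apply Hnn; lra]. }
  unfold Iint in HI.
  rewrite <- (RInt_Chasles f (-1) a 1), <- (RInt_Chasles f a b 1) in HI;
    try (apply ex_RInt_Icont; lra || auto).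
  unfold plus in HI; simpl in HI. lra.
Qed.

(* Horner encoding: [deg_lt n f] says that [f] is a polynomial function of degree [< n]. *)
Fixpoint deg_lt (n : nat) (f : R -> R) : Prop :=
  match n with
  | O => forall x, f x = 0
  | S m => exists a g, deg_lt m g /\ forall x, f x = a + x * g x
  end.

Lemma deg_lt_ext n f g : (forall x, f x = g x) -> deg_lt n f -> deg_lt n g.
Proof.
  destruct n as [|n]; simpl; intros E Hf.
  - intros x; rewrite <- E; auto.
  - destruct Hf as [a [h [Hh Hf]]]. exists a, h. split; auto.
    intros x; rewrite <- E; auto.
Qed.

Lemma Icont_deg_lt n f : deg_lt n f -> Icont f.
Proof.
  revert f; induction n as [|n IH]; simpl; intros f Hf.
  - apply (Icont_ext (fun _ => 0)); [intros x; rewrite Hf; auto | apply Icont_const].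
  - destruct Hf as [a [g [Hg Hf]]].
    apply (Icont_ext (fun x => a + x * g x)); [intros x; rewrite Hf; auto |].
    apply Icont_plus, Icont_mult; auto using Icont_const, Icont_id.
Qed.

Lemma deg_lt_0 n : deg_lt n (fun _ => 0).
Proof.
  induction n as [|n IH]; simpl; auto.
  exists 0, (fun _ => 0). split; auto. intros; ring.
Qed.

Lemma deg_lt_S n f : deg_lt n f -> deg_lt (S n) f.
Proof.
  revert f; induction n as [|n IH]; intros f Hf.
  - exists 0, (fun _ => 0). split; [apply deg_lt_0 |]. intros x; rewrite Hf; ring.
  - destruct Hf as [a [g [Hg Hf]]]. exists a, g. split; auto.
Qed.

Lemma deg_lt_plus n f g : deg_lt n f -> deg_lt n g -> deg_lt n (fun x => f x + g x).
Proof.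
  revert f g; induction n as [|n IH]; simpl; intros f g Hf Hg.
  - intros x; rewrite Hf, Hg; ring.
  - destruct Hf as [a [f' [Hf' Hf]]], Hg as [b [g' [Hg' Hg]]].
    exists (a + b), (fun x => f' x + g' x). split; auto.
    intros x; rewrite Hf, Hg; ring.
Qed.

Lemma deg_lt_scal n l f : deg_lt n f -> deg_lt n (fun x => l * f x).
Proof.
  revert f; induction n as [|n IH]; simpl; intros f Hf.
  - intros x; rewrite Hf; ring.
  - destruct Hf as [a [g [Hg Hf]]]. exists (l * a), (fun x => l * g x). split; auto.
    intros x; rewrite Hf; ring.
Qed.

Lemma deg_lt_mulx n f : deg_lt n f -> deg_lt (S n) (fun x => x * f x).
Proof. intros Hf. exists 0, f. split; auto. intros; ring. Qed.

Lemma deg_lt_pow n : deg_lt (S n) (fun x => x ^ n).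
Proof.
  induction n as [|n IH].
  - exists 1, (fun _ => 0). split; [apply deg_lt_0 | intros; simpl; ring].
  - apply deg_lt_mulx in IH. apply (deg_lt_ext _ _ _ (fun x => eq_refl) IH).
Qed.

Lemma deg_lt_sum (q : nat -> R) n :
  deg_lt (S n) (fun x => sum_f_R0 (fun j => q j * x ^ j) n).
Proof.
  induction n as [|n IH].
  - exact (deg_lt_scal _ _ _ (deg_lt_pow 0)).
  - exact (deg_lt_plus _ _ _ (deg_lt_S _ _ IH) (deg_lt_scal _ _ _ (deg_lt_pow _))).
Qed.

Lemma deg_lt_sum_lower (q : nat -> R) n :
  deg_lt n (fun x => sum_f_R0 (fun j => q j * x ^ j) n - q n * x ^ n).
Proof.
  destruct n as [|n].
  - intros x; simpl; ring.
  - apply (deg_lt_ext _ _ _ (fun x => eq_sym (Rplus_minus_r _ _))), deg_lt_sum.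
Qed.

Lemma deg_lt_poly_of c k a : deg_lt (S k) (poly_of c k a).
Proof. apply deg_lt_sum. Qed.

Lemma Icont_poly_of c k a : Icont (poly_of c k a).
Proof. eapply Icont_deg_lt, deg_lt_poly_of. Qed.

Lemma poly_of_monic c k a : c k k a = 1 ->
  exists L, deg_lt k L /\ forall x, poly_of c k a x = x ^ k + L x.
Proof.
  intros Hk. exists (fun x => poly_of c k a x - c k k a * x ^ k).
  split; [apply deg_lt_sum_lower | intros x; rewrite Hk; ring].
Qed.

Lemma continuous_eq0 (h : R -> R) x0 : continuous h x0 ->
  (forall y, x0 < y < x0 + 1 -> h y = 0) -> h x0 = 0.
Proof.
  intros Hh Hz. destruct (Req_dec (h x0) 0) as [|Hn]; auto. exfalso.
  destruct (continuous_eps_delta h x0 _ Hh (Rabs_pos_lt _ Hn)) as [d Hd].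
  assert (Hd0 := cond_pos d).
  set (m := Rmin (d / 2) (1 / 2)).
  assert (Hm : 0 < m <= d / 2 /\ m <= 1 / 2)
    by (unfold m; repeat split; [apply Rmin_case; lra | apply Rmin_l | apply Rmin_r]).
  specialize (Hd (x0 + m) ltac:(rewrite Rabs_right; lra)).
  rewrite Hz, Rminus_0_l, Rabs_Ropp in Hd by lra. lra.
Qed.

Lemma monic_not_vanishing n L : deg_lt n L ->
  ~ (forall x, -1 < x < 1 -> x ^ n + L x = 0).
Proof.
  revert L; induction n as [|n IH]; intros L HL H0.
  - specialize (H0 0 ltac:(lra)). simpl in HL, H0. rewrite HL in H0. lra.
  - destruct HL as [a [g [Hg HL]]].
    assert (Ha : a = 0) by (specialize (H0 0 ltac:(lra)); rewrite HL in H0; simpl in H0; lra).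
    apply (IH g Hg). intros x Hx.
    assert (Hxy : forall y, -1 < y < 1 -> y <> 0 -> y ^ n + g y = 0).
    { intros y Hy Hy0. specialize (H0 y Hy). rewrite HL, Ha in H0.
      apply (Rmult_eq_reg_l y); auto. simpl in H0. lra. }
    destruct (Req_dec x 0) as [->|Hx0]; auto.
    apply (continuous_eq0 (fun y => y ^ n + g y)).
    + apply (Icont_plus _ _ (Icont_pow _ n Icont_id) (Icont_deg_lt n g Hg)); lra.
    + intros y Hy. apply Hxy; lra.
Qed.

Ltac solve_Icont := repeat
  match goal with
  | H : Icont ?f |- Icont ?f => exact H
  | |- Icont (fun x => @?f x * @?g x) => apply (Icont_mult f g)
  | |- Icont (fun x => @?f x + @?g x) => apply (Icont_plus f g)
  | |- Icont (fun x => x ^ _) => apply (Icont_pow (fun x => x)), Icont_id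
  | |- Icont (fun x => x) => apply Icont_id
  | |- Icont (fun _ => _) => apply Icont_const
  | |- Icont (poly_of _ _ _) => apply Icont_poly_of
  | |- Icont (fun x => sum_f_R0 _ _) => exact (Icont_deg_lt _ _ (deg_lt_sum _ _))
  | H : deg_lt _ ?f |- Icont ?f => exact (Icont_deg_lt _ _ H)
  | |- Icont (fun x => ?f x) => change (Icont f)
  end.

Lemma Iint_orth_deg_lt (P w : R -> R) m : Icont P -> Icont w ->
  (forall i, (i < m)%nat -> Iint (fun x => x ^ i * P x * w x) = 0) ->
  forall f, deg_lt m f -> Iint (fun x => f x * P x * w x) = 0.
Proof.
  intros HP Hw Horth.
  assert (Hshift : forall n f i, deg_lt n f -> (n + i <= m)%nat ->
            Iint (fun x => x ^ i * f x * P x * w x) = 0).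
  { induction n as [|n IH]; intros f i Hf Hle.
    - rewrite <- Iint_0. apply Iint_ext. intros x _. simpl in Hf. rewrite Hf; ring.
    - destruct Hf as [a [g [Hg Hf]]].
      rewrite (Iint_ext _ (fun x => a * (x ^ i * P x * w x) + x ^ S i * g x * P x * w x))
        by (intros x _; rewrite Hf; simpl; ring).
      rewrite Iint_plus, Iint_scal by solve_Icont.
      rewrite Horth, (IH g (S i)) by (assumption || lia). ring. }
  intros f Hf. rewrite <- (Hshift m f 0%nat) by (assumption || lia).
  apply Iint_ext; intros; simpl; ring.
Qed.

Section MonicOrthogonal.

Variables (w : R -> R -> R) (c : nat -> nat -> R -> R) (a : R).
Hypothesis Hw : Icont (w a).
Hypothesis Hc : monic_orthogonal w c a.

Lemma monic_orthogonal_pow k i : (i < k)%nat ->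
  Iint (fun x => x ^ i * poly_of c k a x * w a x) = 0.
Proof.
  induction i as [i IH] using lt_wf_ind; intros Hik.
  destruct (poly_of_monic c i a (proj1 Hc i)) as [L [HL HLe]].
  rewrite (Iint_ext _ (fun x => poly_of c i a x * poly_of c k a x * w a x
                              + (-1) * (L x * poly_of c k a x * w a x)))
    by (intros x _; rewrite HLe; ring).
  rewrite Iint_plus, Iint_scal by solve_Icont.
  rewrite <- RInt_Defs_Iint by solve_Icont.
  rewrite (proj2 Hc i k) by lia.
  rewrite (Iint_orth_deg_lt (poly_of c k a) (w a) i); auto; [ring | solve_Icont |].
  intros j Hj; apply IH; lia.
Qed.

Hypothesis Hwpos : forall x, -1 <= x <= 1 -> 0 < w a x.

Lemma Iint_weighted_sq_eq0 Q : Icont Q -> Iint (fun x => Q x * Q x * w a x) = 0 ->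
  forall x, -1 <= x <= 1 -> Q x = 0.
Proof.
  intros HQ HI x Hx.
  assert (Hnn : forall y, -1 <= y <= 1 -> 0 <= Q y * Q y * w a y)
    by (intros y Hy; specialize (Hwpos y Hy); nra).
  assert (H0 := Iint_ge0_eq0 (fun y => Q y * Q y * w a y) ltac:(solve_Icont) Hnn HI x Hx).
  specialize (Hwpos x Hx). cbv beta in H0.
  destruct (Rmult_integral _ _ H0) as [H1|H1]; [| lra].
  destruct (Rmult_integral _ _ H1); assumption.
Qed.

Lemma monic_orthogonal_norm_neq0 k :
  Iint (fun x => x ^ k * poly_of c k a x * w a x) <> 0.
Proof.
  intros E. destruct (poly_of_monic c k a (proj1 Hc k)) as [L [HL HLe]].
  apply (monic_not_vanishing k L HL). intros x Hx. rewrite <- HLe.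
  apply (Iint_weighted_sq_eq0 (poly_of c k a)); [solve_Icont | | lra].
  rewrite (Iint_ext _ (fun x => x ^ k * poly_of c k a x * w a x
                              + L x * poly_of c k a x * w a x))
    by (intros y _; rewrite HLe at 1; ring).
  rewrite Iint_plus, E by solve_Icont.
  rewrite (Iint_orth_deg_lt (poly_of c k a) (w a) k); auto; [ring | solve_Icont |].
  apply monic_orthogonal_pow.
Qed.

(* [Q := F - l phi_(k+1) - b phi_k] has degree [<= k] and, for the right [b], is
   orthogonal to [1, ..., x^k], hence to itself; positivity of the weight gives [Q = 0]. *)
Lemma monic_orthogonal_expansion k F l :
  deg_lt (S k) (fun x => F x - l * poly_of c (S k) a x) ->
  (forall i, (i < k)%nat -> Iint (fun x => x ^ i * F x * w a x) = 0) ->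
  forall x, -1 <= x <= 1 ->
  F x = l * poly_of c (S k) a x
        + Iint (fun x => x ^ k * F x * w a x)
          / Iint (fun x => x ^ k * poly_of c k a x * w a x) * poly_of c k a x.
Proof.
  intros HF Horth.
  assert (Kne := monic_orthogonal_norm_neq0 k).
  set (b := Iint (fun x => x ^ k * F x * w a x)
            / Iint (fun x => x ^ k * poly_of c k a x * w a x)).
  set (Q := fun x => F x - l * poly_of c (S k) a x - b * poly_of c k a x).
  assert (HQ : deg_lt (S k) Q).
  { apply (deg_lt_ext _ (fun x => (F x - l * poly_of c (S k) a x) + (- b) * poly_of c k a x));
      [intros; unfold Q; ring |].
    apply deg_lt_plus; [exact HF | apply deg_lt_scal, deg_lt_poly_of]. }
  assert (HFc : Icont F).
  { apply (Icont_ext (fun x => (F x - l * poly_of c (S k) a x) + l * poly_of c (S k) a x));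
      [intros; ring | solve_Icont]. }
  assert (HQorth : forall i, (i < S k)%nat -> Iint (fun x => x ^ i * Q x * w a x) = 0).
  { intros i Hi.
    rewrite (Iint_ext _ (fun x => (x ^ i * F x * w a x
         + (- l) * (x ^ i * poly_of c (S k) a x * w a x))
         + (- b) * (x ^ i * poly_of c k a x * w a x)))
      by (intros; unfold Q; ring).
    rewrite !Iint_plus, !Iint_scal by solve_Icont.
    rewrite (monic_orthogonal_pow (S k) i Hi).
    destruct (Nat.eq_dec i k) as [->|Hne].
    - unfold b. field. exact Kne.
    - rewrite Horth, monic_orthogonal_pow by lia. ring. }
  intros x Hx.
  assert (HQ0 : Q x = 0).
  { apply Iint_weighted_sq_eq0; [solve_Icont | | exact Hx].
    apply (Iint_orth_deg_lt Q (w a) (S k)); solve_Icont || assumption. }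
  unfold Q in HQ0. lra.
Qed.

End MonicOrthogonal.

Lemma one_plus_mul_pos a x : -1 < a < 1 -> -1 <= x <= 1 -> 0 < 1 + a * x.
Proof.
  intros Ha Hx.
  assert (0 <= (1 + a) * (1 + x)) by (apply Rmult_le_pos; lra).
  destruct (Rle_lt_dec 1 x).
  - replace x with 1 by lra. lra.
  - assert (0 < (1 - a) * (1 - x)) by (apply Rmult_lt_0_compat; lra). nra.
Qed.

Lemma locally_open_interval a : -1 < a < 1 -> locally a (fun y => -1 < y < 1).
Proof.
  intros Ha. assert (Hr : 0 < Rmin (a + 1) (1 - a)) by (apply Rmin_case; lra).
  exists (mkposreal _ Hr). intros y Hy.
  unfold ball in Hy; simpl in Hy; unfold AbsRing_ball, abs, minus, plus, opp in Hy; simpl in Hy.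
  apply Rabs_def2 in Hy. revert Hy. apply Rmin_case_strong; intros; lra.
Qed.

Lemma is_derive_locally_const (f : R -> R) a C : -1 < a < 1 ->
  (forall b, -1 < b < 1 -> f b = C) -> is_derive f a 0.
Proof.
  intros Ha Hf. apply (is_derive_ext_loc (fun _ => C));
    [| exact (@is_derive_const R_AbsRing R_NormedModule C a)].
  apply (filter_imp (fun y => -1 < y < 1)); [| apply locally_open_interval, Ha].
  intros y Hy; symmetry; auto.
Qed.

Lemma Icont_inv_pow a n : -1 < a < 1 -> Icont (fun x => / (1 + a * x) ^ n).
Proof.
  intros Ha x Hx. apply (continuous_Rinv_comp (fun x => (1 + a * x) ^ n)).
  - apply (Icont_pow (fun x => 1 + a * x)); [solve_Icont | exact Hx].
  - apply pow_nonzero, Rgt_not_eq, one_plus_mul_pos; assumption.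
Qed.

Lemma Icont_omega a : -1 < a < 1 -> Icont (omega a).
Proof. exact (fun Ha => Icont_inv_pow a 4 Ha). Qed.

Lemma Icont_omegat a : -1 < a < 1 -> Icont (omegat a).
Proof. exact (fun Ha => Icont_inv_pow a 5 Ha). Qed.

Lemma omegat_pos a x : -1 < a < 1 -> -1 <= x <= 1 -> 0 < omegat a x.
Proof.
  intros Ha Hx. apply Rinv_0_lt_compat, pow_lt, one_plus_mul_pos; assumption.
Qed.

Lemma omega_omegat a x : 1 + a * x <> 0 -> omega a x = (1 + a * x) * omegat a x.
Proof. intros Hax. unfold omega, omegat. field. exact Hax. Qed.

Lemma is_derive_omega a x : 1 + a * x <> 0 ->
  is_derive (fun b => omega b x) a (-4 * x * omegat a x).
Proof.
  intros Hax. unfold omega, omegat. auto_derive.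
  - intros E. apply Hax. repeat (apply Rmult_integral in E; destruct E as [E|E]); auto; lra.
  - field. exact Hax.
Qed.

Lemma continuity_2d_pt_pow f n x y :
  continuity_2d_pt f x y -> continuity_2d_pt (fun u v => f u v ^ n) x y.
Proof.
  intros Hf; induction n as [|n IH]; simpl.
  - apply continuity_2d_pt_const.
  - apply (continuity_2d_pt_mult f (fun u v => f u v ^ n)); assumption.
Qed.

Definition moment (m : nat) (a : R) : R := Iint (fun x => x ^ m * omega a x).

Lemma is_derive_pow_omega m a x : 1 + a * x <> 0 ->
  is_derive (fun b => x ^ m * omega b x) a (x ^ m * (-4 * x * omegat a x)).
Proof.
  intros Hax. apply (is_derive_scal (fun b => omega b x)), is_derive_omega, Hax.
Qed.

Lemma continuity_2d_pt_Derive_pow_omega m a t : 1 + a * t <> 0 ->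
  continuity_2d_pt (fun u v => Derive (fun z => v ^ m * omega z v) u) a t.
Proof.
  intros Hat.
  assert (H1 : continuity_2d_pt (fun u v => 1 + u * v) a t).
  { apply (continuity_2d_pt_plus (fun _ _ => 1) (fun u v => u * v));
      [apply continuity_2d_pt_const |].
    apply (continuity_2d_pt_mult (fun u _ => u) (fun _ v => v));
      [apply continuity_2d_pt_id1 | apply continuity_2d_pt_id2]. }
  apply (continuity_2d_pt_ext_loc (fun u v => v ^ m * (-4 * v * / (1 + u * v) ^ 5))).
  - apply (locally_2d_impl (fun u v => 1 + u * v <> 0));
      [| exact (continuity_2d_pt_neq_0 _ _ _ H1 Hat)].
    apply locally_2d_forall. intros u v Huv.
    symmetry. apply is_derive_unique, is_derive_pow_omega, Huv.
  - apply (continuity_2d_pt_mult (fun _ v => v ^ m) (fun u v => -4 * v * / (1 + u * v) ^ 5));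
      [apply (continuity_2d_pt_pow (fun _ v => v)), continuity_2d_pt_id2 |].
    apply (continuity_2d_pt_mult (fun _ v => -4 * v) (fun u v => / (1 + u * v) ^ 5)).
    + apply (continuity_2d_pt_mult (fun _ _ => -4) (fun _ v => v));
        [apply continuity_2d_pt_const | apply continuity_2d_pt_id2].
    + apply (continuity_2d_pt_inv (fun u v => (1 + u * v) ^ 5));
        [apply (continuity_2d_pt_pow (fun u v => 1 + u * v)), H1 | apply pow_nonzero, Hat].
Qed.

Lemma is_derive_moment m a : -1 < a < 1 ->
  is_derive (moment m) a (-4 * Iint (fun x => x ^ S m * omegat a x)).
Proof.
  intros Ha.
  replace (-4 * Iint (fun x => x ^ S m * omegat a x))
    with (RInt (fun t => Derive (fun u => t ^ m * omega u t) a) (-1) 1).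
  - apply (is_derive_RInt_param (fun u t => t ^ m * omega u t)).
    + apply (filter_imp (fun y => -1 < y < 1)); [| apply locally_open_interval, Ha].
      intros y Hy t Ht. rewrite Rmin_left, Rmax_right in Ht by lra. eexists. apply is_derive_pow_omega.
      apply Rgt_not_eq, one_plus_mul_pos; assumption.
    + intros t Ht. rewrite Rmin_left, Rmax_right in Ht by lra.
      apply continuity_2d_pt_Derive_pow_omega.
      apply Rgt_not_eq, one_plus_mul_pos; assumption.
    + apply (filter_imp (fun y => -1 < y < 1)); [| apply locally_open_interval, Ha].
      intros y Hy. apply ex_RInt_Icont; try lra.
      apply (Icont_mult (fun t => t ^ m)); [solve_Icont | apply Icont_omega, Hy].
  - rewrite <- Iint_scal by (apply (Icont_mult (fun t => t ^ S m)); [solve_Icont | apply Icont_omegat, Ha]).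
    apply Iint_ext. intros t Ht.
    assert (E := is_derive_unique _ _ _ (is_derive_pow_omega m a t
                   (Rgt_not_eq _ _ (one_plus_mul_pos a t Ha Ht)))).
    simpl in E |- *. rewrite E. ring.
Qed.

Lemma Iint_pow_sum (w : R -> R) i (q : nat -> R) n : Icont w ->
  Iint (fun x => x ^ i * sum_f_R0 (fun j => q j * x ^ j) n * w x)
  = sum_f_R0 (fun j => q j * Iint (fun x => x ^ (i + j) * w x)) n.
Proof.
  intros Hw. induction n as [|n IH].
  - simpl. rewrite <- Iint_scal by solve_Icont.
    apply Iint_ext; intros. rewrite Nat.add_0_r. simpl. ring.
  - rewrite tech5, <- IH, <- Iint_scal, <- Iint_plus by solve_Icont.
    apply Iint_ext; intros. rewrite tech5, pow_add. ring.
Qed.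

Lemma K_of_moments c k i a : -1 < a < 1 ->
  K_of omega c i k a = sum_f_R0 (fun j => c k j a * moment (i + j) a) k.
Proof.
  intros Ha. assert (Hw := Icont_omega a Ha).
  unfold K_of. rewrite RInt_Defs_Iint by solve_Icont. apply Iint_pow_sum, Hw.
Qed.

Lemma is_derive_sum_f_R0 (g : nat -> R -> R) (g' : nat -> R) a n :
  (forall j, is_derive (g j) a (g' j)) ->
  is_derive (fun b => sum_f_R0 (fun j => g j b) n) a (sum_f_R0 g' n).
Proof.
  intros H. induction n as [|n IH]; simpl; [apply H |].
  apply (is_derive_plus (fun b => sum_f_R0 (fun j => g j b) n) (g (S n))); auto.
Qed.

Definition dcoef (c : nat -> nat -> R -> R) : nat -> nat -> R -> R :=
  fun k j => Derive (c k j).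

Definition dPhi (c : nat -> nat -> R -> R) (k : nat) (a x : R) : R :=
  -4 * x * omegat a x * poly_of c k a x + omega a x * poly_of (dcoef c) k a x.

Lemma is_derive_Phi_of c k a x : 1 + a * x <> 0 -> (forall j, ex_derive (c k j) a) ->
  is_derive (fun b => Phi_of omega c k b x) a (dPhi c k a x).
Proof.
  intros Hax Hd. unfold Phi_of, dPhi.
  apply (is_derive_mult (fun b => omega b x) (fun b => poly_of c k b x));
    [apply is_derive_omega, Hax | | intros; apply Rmult_comm].
  apply (is_derive_sum_f_R0 (fun j b => c k j b * x ^ j)). intros j.
  apply (is_derive_ext (fun b => x ^ j * c k j b)); [intros; apply Rmult_comm |].
  replace (dcoef c k j a * x ^ j) with (x ^ j * Derive (c k j) a) by (unfold dcoef; ring).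
  apply is_derive_scal, Derive_correct, Hd.
Qed.

(* Differentiation under the integral sign, performed on the moments since the
   coefficients of [phi_k] are merely differentiable. *)
Lemma is_derive_K_of c k i a : -1 < a < 1 -> (forall j, ex_derive (c k j) a) ->
  is_derive (fun b => K_of omega c i k b) a (Iint (fun x => x ^ i * dPhi c k a x)).
Proof.
  intros Ha Hd. assert (Hw := Icont_omega a Ha). assert (Hwt := Icont_omegat a Ha).
  replace (Iint (fun x => x ^ i * dPhi c k a x))
    with (sum_f_R0 (fun j => Derive (c k j) a * moment (i + j) a
            + c k j a * (-4 * Iint (fun x => x ^ S (i + j) * omegat a x))) k).
  - apply (is_derive_ext_loc (fun b => sum_f_R0 (fun j => c k j b * moment (i + j) b) k)).
    + apply (filter_imp (fun y => -1 < y < 1)); [| apply locally_open_interval, Ha].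
      intros y Hy. symmetry. apply K_of_moments, Hy.
    + apply (is_derive_sum_f_R0 (fun j b => c k j b * moment (i + j) b)). intros j.
      apply (is_derive_mult (c k j) (moment (i + j)));
        [apply Derive_correct, Hd | apply is_derive_moment, Ha | intros; apply Rmult_comm].
  - rewrite (Iint_ext _ (fun x => x ^ i * poly_of (dcoef c) k a x * omega a x
                                + (-4) * (x ^ S i * poly_of c k a x * omegat a x)))
      by (intros x _; unfold dPhi; simpl; ring).
    rewrite Iint_plus, Iint_scal by solve_Icont.
    unfold poly_of. rewrite !Iint_pow_sum by assumption.
    rewrite sum_plus, scal_sum. f_equal. apply sum_eq. intros j _. simpl. ring.
Qed.

Lemma K_of_Iint w c i k a : Icont (w a) ->
  K_of w c i k a = Iint (fun x => x ^ i * poly_of c k a x * w a x).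
Proof. intros Hw. apply RInt_Defs_Iint. solve_Icont. Qed.

Section Recurrences.

Variables (c ct : nat -> nat -> R -> R) (a : R) (k : nat).
Hypothesis Ha : -1 < a < 1.
Hypothesis Hct : monic_orthogonal omegat ct a.

Lemma one_plus_mul_neq0 x : -1 <= x <= 1 -> 1 + a * x <> 0.
Proof. intros Hx. apply Rgt_not_eq, one_plus_mul_pos; assumption. Qed.

Lemma omegat_expansion F l :
  deg_lt (S k) (fun x => F x - l * poly_of ct (S k) a x) ->
  (forall i, (i < k)%nat -> Iint (fun x => x ^ i * F x * omegat a x) = 0) ->
  forall x, -1 <= x <= 1 ->
  omegat a x * F x = l * Phi_of omegat ct (S k) a x
    + Iint (fun y => y ^ k * F y * omegat a y) / K_of omegat ct k k a
      * Phi_of omegat ct k a x.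
Proof.
  intros HF Horth x Hx. assert (Hwt := Icont_omegat a Ha).
  rewrite (monic_orthogonal_expansion omegat ct a Hwt Hct (fun y => omegat_pos a y Ha) k F l HF Horth x Hx).
  unfold Phi_of. rewrite K_of_Iint by exact Hwt. ring.
Qed.

Lemma Phi_recurrence x : monic_orthogonal omega c a -> -1 <= x <= 1 ->
  Phi_of omega c k a x = a * Phi_of omegat ct (S k) a x
    + K_of omega c k k a / K_of omegat ct k k a * Phi_of omegat ct k a x.
Proof.
  intros Hc Hx. assert (Hw := Icont_omega a Ha).
  destruct (poly_of_monic c k a (proj1 Hc k)) as [L [HL HLe]].
  destruct (poly_of_monic ct (S k) a (proj1 Hct (S k))) as [L' [HL' HL'e]].
  set (F := fun y => (1 + a * y) * poly_of c k a y).
  assert (HFw : forall i, Iint (fun y => y ^ i * F y * omegat a y) = K_of omega c i k a).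
  { intros i. rewrite K_of_Iint by exact Hw. apply Iint_ext. intros y Hy.
    unfold F. rewrite omega_omegat by (apply one_plus_mul_neq0, Hy). ring. }
  transitivity (omegat a x * F x).
  { unfold Phi_of, F. rewrite omega_omegat by (apply one_plus_mul_neq0, Hx). ring. }
  rewrite (omegat_expansion F a), HFw; [reflexivity | | | exact Hx].
  - apply (deg_lt_ext _ (fun y => ((y ^ k + L y) + a * (y * L y)) + (- a) * L' y)).
    { intros y. unfold F. rewrite HLe, HL'e. simpl. ring. }
    repeat apply deg_lt_plus; auto using deg_lt_pow, deg_lt_S, deg_lt_scal, deg_lt_mulx.
  - intros i Hi. rewrite HFw, K_of_Iint by exact Hw.
    apply (monic_orthogonal_pow omega c a Hw Hc k i Hi).
Qed.

Lemma Phi_derive_recurrence x :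
  (forall b, -1 < b < 1 -> monic_orthogonal omega c b) ->
  (forall j, ex_derive (c k j) a) -> -1 <= x <= 1 ->
  dPhi c k a x = -4 * Phi_of omegat ct (S k) a x
    + Iint (fun y => y ^ k * dPhi c k a y) / K_of omegat ct k k a * Phi_of omegat ct k a x.
Proof.
  intros Hc Hd Hx.
  destruct (poly_of_monic c k a (proj1 (Hc a Ha) k)) as [L [HL HLe]].
  destruct (poly_of_monic ct (S k) a (proj1 Hct (S k))) as [L' [HL' HL'e]].
  set (D := poly_of (dcoef c) k a).
  (* [phi_k] stays monic, so its derivative has degree [< k]. *)
  assert (HD : deg_lt k D).
  { assert (Hdk : dcoef c k k a = 0).
    { apply (is_derive_unique (c k k) a), (is_derive_locally_const _ a 1 Ha).
      intros b Hb. apply (proj1 (Hc b Hb) k). }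
    refine (deg_lt_ext _ _ _ _ (deg_lt_sum_lower (fun j => dcoef c k j a) k)).
    intros y. unfold D, poly_of. rewrite Hdk. ring. }
  set (F := fun y => -4 * y * poly_of c k a y + (1 + a * y) * D y).
  assert (HFw : forall i, Iint (fun y => y ^ i * F y * omegat a y)
                        = Iint (fun y => y ^ i * dPhi c k a y)).
  { intros i. apply Iint_ext. intros y Hy.
    unfold F, dPhi, D. rewrite omega_omegat by (apply one_plus_mul_neq0, Hy). ring. }
  transitivity (omegat a x * F x).
  { unfold F, dPhi, D. rewrite omega_omegat by (apply one_plus_mul_neq0, Hx). ring. }
  rewrite (omegat_expansion F (-4)), HFw; [reflexivity | | | exact Hx].
  - apply (deg_lt_ext _ (fun y => (((-4) * (y * L y) + D y) + a * (y * D y)) + 4 * L' y)).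
    { intros y. unfold F. rewrite HLe, HL'e. simpl. ring. }
    repeat apply deg_lt_plus; auto using deg_lt_S, deg_lt_scal, deg_lt_mulx.
  - intros i Hi. rewrite HFw.
    rewrite <- (is_derive_unique _ _ _ (is_derive_K_of c k i a Ha Hd)).
    apply (is_derive_unique _ a), (is_derive_locally_const _ a 0 Ha).
    intros b Hb. assert (Hwb := Icont_omega b Hb).
    rewrite K_of_Iint by exact Hwb. apply (monic_orthogonal_pow omega c b Hwb (Hc b Hb) k i Hi).
Qed.

End Recurrences.

Theorem lemma2
  (c ct : nat -> nat -> R -> R)
  (Hc : forall a, -1 < a < 1 -> monic_orthogonal omega c a)
  (Hct : forall a, -1 < a < 1 -> monic_orthogonal omegat ct a)
  (Hsc : forall k j a, -1 < a < 1 -> derivable_pt (c k j) a)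
  (Hsct : forall k j a, -1 < a < 1 -> derivable_pt (ct k j) a) :
  forall (alpha : R), -1 < alpha < 1 ->
  forall (k : nat) (mu : R), -1 <= mu <= 1 ->
    Phi_of omega c k alpha mu
      = alpha * Phi_of omegat ct (S k) alpha mu
        + (K_of omega c k k alpha / K_of omegat ct k k alpha)
          * Phi_of omegat ct k alpha mu
    /\
    exists dK : R,
      derivable_pt_lim (fun a => K_of omega c k k a) alpha dK /\
      derivable_pt_lim (fun a => Phi_of omega c k a mu) alpha
        (-4 * Phi_of omegat ct (S k) alpha mu
         + (dK / K_of omegat ct k k alpha) * Phi_of omegat ct k alpha mu).
Proof.
  intros alpha Ha k mu Hmu.
  assert (Hd : forall j, ex_derive (c k j) alpha)
    by (intros j; apply ex_derive_Reals_1, Hsc, Ha).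
  split; [apply Phi_recurrence; auto |].
  exists (Iint (fun y => y ^ k * dPhi c k alpha y)). split.
  - apply is_derive_Reals, is_derive_K_of; assumption.
  - apply is_derive_Reals.
    rewrite <- (Phi_derive_recurrence c ct alpha k Ha (Hct alpha Ha) mu Hc Hd Hmu).
    apply is_derive_Phi_of; [apply one_plus_mul_neq0 |]; assumption.
Qed.
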